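(* Let $X\colon\mathbf{CommRing}\to\mathbf{Set}$ be a functor that preserves products, and let $p$ be a prime. Let $Z_{X,p}$ be the species such that a $Z_{X,p}$-structure on a finite set is a way to make that set into a ring $k_p$ that is a finite product of finite fields of characteristic $p$ together with an element of $X(k_p)$, and let $F_{X,p}$ be the species such that an $F_{X,p}$-structure on a finite set is a way to make that set into a field $k$ of characteristic $p$ together with an element of $X(k)$. Then $Z_{X,p}\cong\exp_D(F_{X,p})$.
   Context: A species is a functor from the groupoid of finite sets and bijections to $\mathbf{Set}$ (structures are transported along bijections); a Dirichlet species is one with value $\emptyset$ on $\emptyset$. The one-element ring counts as the empty product of fields. Dirichlet product: a cartesian decomposition of a finite set $S$ is an ordered pair $(\pi_1,\pi_2)$ of equivalence relations on $S$ such that each $\pi_1$-class meets each $\pi_2$-class in exactly one element; with $S_i$ the set of $\pi_i$-classes, $(F\cdot_D G)(S)=\coprod_{(\pi_1,\pi_2)}F(S_1)\times G(S_2)$. This is symmetric monoidal with unit $I$, where $I(S)$ is a singleton if $|S|=1$ and empty otherwise. Dirichlet exponential: $F^n_D=F\cdot_D\cdots\cdot_D F$ ($n$ factors) for $n\ge1$, $F^0_D=I$; $S_n$ acts on $F^n_D$ via the symmetry; $\exp_D(F)=\coprod_{n\ge0}F^n_D/S_n$, computed pointwise. *)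

From HB Require Import structures.
From mathcomp Require Import all_boot all_order all_algebra all_fingroup.
Set Implicit Arguments. Unset Strict Implicit. Unset Printing Implicit Defensive.
Import GRing.Theory.
Local Open Scope ring_scope.

Record ringstr (S : Type) := RingStr {
  r0 : S; r1 : S; radd : S -> S -> S; ropp : S -> S; rmul : S -> S -> S;
  raddA : associative radd; raddC : commutative radd;
  radd0 : left_id r0 radd; raddN : left_inverse r0 ropp radd;
  rmulA : associative rmul; rmulC : commutative rmul;
  rmul1 : left_id r1 rmul; rmulD : left_distributive rmul radd }.

Definition rring (S : finType) (r : ringstr S) : Type := S.
HB.instance Definition _ (S : finType) (r : ringstr S) := Finite.on (rring r).
HB.instance Definition _ (S : finType) (r : ringstr S) :=
  GRing.isZmodule.Build (rring r) (@raddA _ r) (@raddC _ r) (@radd0 _ r) (@raddN _ r).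
HB.instance Definition _ (S : finType) (r : ringstr S) :=
  GRing.Zmodule_isComPzRing.Build (rring r) (@rmulA _ r) (@rmulC _ r) (@rmul1 _ r) (@rmulD _ r).

(* The category CommRing: MathComp's comPzRingType (commutative rings, *)
(* the zero ring allowed), morphisms {rmorphism R -> S}.              *)
Record CRingFunctor := {
  Fob :> comPzRingType -> Type;
  Fmap : forall R S : comPzRingType, {rmorphism R -> S} -> Fob R -> Fob S;
  Fmap_id : forall (R : comPzRingType) (x : Fob R),
      Fmap (idfun : {rmorphism R -> R}) x = x;
  Fmap_comp : forall (R S T : comPzRingType) (f : {rmorphism R -> S})
      (g : {rmorphism S -> T}) (x : Fob R),
      Fmap (g \o f : {rmorphism R -> T}) x = Fmap g (Fmap f x) }.

(* X preserves the empty product: terminal objects of CommRing (the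
   one-element rings) are sent to one-element sets. *)
Definition preserves_terminal (X : CRingFunctor) : Prop :=
  forall R : comPzRingType, (1 = 0 :> R) -> exists x : X R, forall y, y = x.

(* X preserves binary products: for every product cone
   (P, p1 : P -> R, p2 : P -> S) in CommRing, (X p1, X p2) is a product cone. *)
Definition preserves_binary_products (X : CRingFunctor) : Prop :=
  forall (P R S : comPzRingType) (p1 : {rmorphism P -> R}) (p2 : {rmorphism P -> S}),
    bijective (fun x : P => (p1 x, p2 x)) ->
    bijective (fun x : X P => (Fmap p1 x, Fmap p2 x)).

Definition preserves_products (X : CRingFunctor) : Prop :=
  preserves_terminal X /\ preserves_binary_products X.

(* R is a field of characteristic p (p is assumed prime in the theorem). *)
Definition is_field_charp (p : nat) (R : comPzRingType) : Prop :=
  [/\ (1 != 0 :> R), (forall x : R, x != 0 -> exists y, x * y = 1)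
    & (p%:R = 0 :> R)].

(* R is (isomorphic to) a finite product of finite fields of
   characteristic p: there are finitely many finite fields K_i of
   characteristic p and ring maps phi_i : R -> K_i such that the induced
   map R -> prod_i K_i is bijective.  n = 0 gives the one-element ring. *)
Definition fin_prod_ffields (p : nat) (R : comPzRingType) : Prop :=
  exists (n : nat) (K : 'I_n -> finFieldType) (phi : forall i, {rmorphism R -> K i}),
    [/\ (forall i, p \in [pchar (K i)]),
        (forall x y : R, (forall i, phi i x = phi i y) -> x = y)
      & (forall y : (forall i, K i), exists x : R, forall i, phi i x = y i)].

Record Zstr (X : CRingFunctor) (p : nat) (S : finType) := ZStr {
  z_ring : ringstr S;
  z_prod : fin_prod_ffields p (rring z_ring);
  z_pt : X (rring z_ring) }.

Record Fstr (X : CRingFunctor) (p : nat) (S : finType) := FStr {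
  f_ring : ringstr S;
  f_field : is_field_charp p (rring f_ring);
  f_pt : X (rring f_ring) }.

Definition ring_pt_transport (X : CRingFunctor) (S T : finType) (g : S -> T)
    (r : ringstr S) (r' : ringstr T) (x : X (rring r)) (x' : X (rring r')) : Prop :=
  exists h : {rmorphism rring r -> rring r'},
    (forall s : S, h s = g s) /\ Fmap h x = x'.

Definition Ztr (X : CRingFunctor) (p : nat) (S T : finType) (g : S -> T)
    (z : Zstr X p S) (z' : Zstr X p T) : Prop :=
  ring_pt_transport g (z_pt z) (z_pt z').

Definition Ftr (X : CRingFunctor) (p : nat) (S T : finType) (g : S -> T)
    (f : Fstr X p S) (f' : Fstr X p T) : Prop :=
  ring_pt_transport g (f_pt f) (f_pt f').

(* An equivalence relation on S is represented by its set of classes,  *)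
(* a partition P of S; blocks P is the finite set of its classes.      *)
Definition blocks (S : finType) (P : {set {set S}}) : finType :=
  {B : {set S} | B \in P}.

(* F^n_D(S): n equivalence relations pi_1..pi_n on S forming a cartesian
   decomposition (every choice of one class of each pi_i meets in
   exactly one element) together with F-structures on each S/pi_i. *)
Record dprodn (F : finType -> Type) (n : nat) (S : finType) := DProd {
  dp_part : 'I_n -> {set {set S}};
  dp_partition : forall i, partition (dp_part i) [set: S];
  dp_cart : forall B : (forall i, blocks (dp_part i)),
      #|\bigcap_(i < n) val (B i)| = 1%N;
  dp_str : forall i, F (blocks (dp_part i)) }.

(* The orbit relation of the action of S_n by permuting the factors. *)
Definition dp_orbit (F : finType -> Type) (n : nat) (S : finType)
    (x y : dprodn F n S) : Prop :=
  exists s : 'S_n,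
    existT (fun pi : 'I_n -> {set {set S}} => forall i, F (blocks (pi i)))
      (dp_part y) (dp_str y)
    = existT (fun pi : 'I_n -> {set {set S}} => forall i, F (blocks (pi i)))
      (fun i => dp_part x (s i)) (fun i => dp_str x (s i)).

Definition quot (T : Type) (R : T -> T -> Prop) : Type :=
  {C : T -> Prop | exists x, forall y, C y <-> R x y}.

(* exp_D(F)(S) = coprod_n F^n_D(S) / S_n *)
Definition expD (F : finType -> Type) (S : finType) : Type :=
  {n : nat & quot (@dp_orbit F n S)}.

Definition in_expD (F : finType -> Type) (n : nat) (S : finType)
    (x : dprodn F n S) (e : expD F S) : Prop :=
  exists C : quot (@dp_orbit F n S), e = existT _ n C /\ sval C x.

Definition dp_tr (F : finType -> Type)
    (FT : forall A B : finType, (A -> B) -> F A -> F B -> Prop)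
    (n : nat) (S T : finType) (g : S -> T) (x : dprodn F n S) (y : dprodn F n T) : Prop :=
  exists h : forall i, blocks (dp_part x i) -> blocks (dp_part y i),
    (forall i B, val (h i B) = g @: val B) /\
    (forall i, FT _ _ (h i) (dp_str x i) (dp_str y i)).

Definition expD_tr (F : finType -> Type)
    (FT : forall A B : finType, (A -> B) -> F A -> F B -> Prop)
    (S T : finType) (g : S -> T) (e : expD F S) (e' : expD F T) : Prop :=
  exists (n : nat) (x : dprodn F n S) (y : dprodn F n T),
    [/\ in_expD x e, in_expD y e' & dp_tr FT g x y].

From HB Require Import structures.
From mathcomp Require Import all_boot all_order all_algebra all_fingroup.
From Stdlib Require Import ProofIrrelevance FunctionalExtensionality PropExtensionality.
From Stdlib Require Import IndefiniteDescription.
Set Implicit Arguments. Unset Strict Implicit. Unset Printing Implicit Defensive.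
Import GRing.Theory.
Local Open Scope ring_scope.

(* A finite product k of finite fields is determined by its ring maps onto
   fields: the kernel of any map from k to a field is the kernel of one of the
   projections k -> k_i (use the orthogonal idempotents of k), so the
   projections are unique up to reordering.  On the underlying set S, each
   projection induces the partition into its fibres, and these partitions form
   a cartesian decomposition of S precisely because k -> prod_i k_i is
   bijective; the blocks of the i-th partition carry the field k_i.  As X
   preserves products, X(k) = prod_i X(k_i), so a point of X(k) is the same as
   a family of points of the X(k_i).  Conversely, fields on the quotients of a
   cartesian decomposition make S, by transport from their product, into a
   product of fields.  All constructions are transports of structure, hence
   natural in S. *)

Lemma dependent_choice (A : Type) (B : A -> Type) (P : forall a, B a -> Prop) :
  (forall a, exists b, P a b) -> exists f : forall a, B a, forall a, P a (f a).
Proof.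
move=> H; exists (fun a => proj1_sig (constructive_indefinite_description _ (H a))).
by move=> a; case: (constructive_indefinite_description _ (H a)).
Qed.

Lemma inj_surj_bijective (A B : Type) (f : A -> B) :
  injective f -> (forall b, exists a, f a = b) -> bijective f.
Proof.
move=> f_inj /functional_choice[g fgK].
by exists g => [a|b]; [apply: f_inj; rewrite fgK | apply: fgK].
Qed.

Definition jointly_bijective (A I : Type) (B : I -> Type) (f : forall i, A -> B i) : Prop :=
  (forall x y, (forall i, f i x = f i y) -> x = y) /\
  (forall y : forall i, B i, exists x, forall i, f i x = y i).

Section JointlyBijective.
Variables (A I : Type) (B : I -> Type) (f : forall i, A -> B i).

Lemma eq_jointly_bijective (g : forall i, A -> B i) :
  (forall i, f i =1 g i) -> jointly_bijective f -> jointly_bijective g.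
Proof.
move=> fg [f_inj f_surj]; split=> [x y E|y].
  by apply: f_inj => i; rewrite !fg.
by have [x fx] := f_surj y; exists x => i; rewrite -fg.
Qed.

Lemma jointly_bijective_postcomp (C : I -> Type) (b : forall i, B i -> C i) :
  (forall i, bijective (b i)) -> jointly_bijective f ->
  jointly_bijective (fun i => b i \o f i).
Proof.
move=> b_bij [f_inj f_surj]; split=> [x y E|y].
  by apply: f_inj => i; apply: (bij_inj (b_bij i)); apply: E.
have [w wE] := dependent_choice (P := fun i (w : B i) => b i w = y i)
  (fun i => let: Bijective c _ cK := b_bij i in ex_intro _ (c (y i)) (cK (y i))).
by have [x fx] := f_surj w; exists x => i /=; rewrite fx wE.
Qed.

Lemma jointly_bijective_precomp (A' : Type) (g : A' -> A) :
  bijective g -> jointly_bijective f -> jointly_bijective (fun i => f i \o g).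
Proof.
move=> [g' gK g'K] [f_inj f_surj]; split=> [x y E|y].
  by apply: (can_inj gK); apply: f_inj; apply: E.
by have [x fx] := f_surj y; exists (g' x) => i /=; rewrite g'K.
Qed.

End JointlyBijective.

Definition rmorph_of (R S : comPzRingType) (f : R -> S)
    (fA : zmod_morphism f) (fM : monoid_morphism f) : {rmorphism R -> S} :=
  HB.pack_for {rmorphism R -> S} f
    (GRing.isZmodMorphism.Build R S f fA) (GRing.isMonoidMorphism.Build R S f fM).

Lemma rmorph_ext (R S : comPzRingType) (f g : {rmorphism R -> S}) : f =1 g -> f = g.
Proof.
case: f => f [[fA] [fM]]; case: g => g [[gA] [gM]] /= /functional_extensionality fg.
by subst g; rewrite (proof_irrelevance _ fA gA) (proof_irrelevance _ fM gM).
Qed.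

Definition inv_rmorph (R S : comPzRingType) (f : {rmorphism R -> S}) (g : S -> R)
    (fK : cancel f g) (gK : cancel g f) : {rmorphism S -> R} :=
  rmorph_of (can2_zmod_morphism fK gK) (can2_monoid_morphism fK gK).

(** * Ring structures on finite sets *)

Lemma ringstr_ext (S : Type) (r r' : ringstr S) :
  r0 r = r0 r' -> r1 r = r1 r' -> radd r =2 radd r' -> ropp r =1 ropp r' ->
  rmul r =2 rmul r' -> r = r'.
Proof.
case: r => z o a n m ? ? ? ? ? ? ? ?; case: r' => z' o' a' n' m' ? ? ? ? ? ? ? ? /=.
move=> zE oE aE nE mE; subst z' o'.
have aE' : a = a' by apply: functional_extensionality => x; exact/functional_extensionality/aE.
have nE' : n = n' by exact/functional_extensionality.
have mE' : m = m' by apply: functional_extensionality => x; exact/functional_extensionality/mE.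
by subst a' n' m'; congr RingStr; apply: proof_irrelevance.
Qed.

Lemma ringstr_eq_rmorph_surj (R : comPzRingType) (B : finType) (r1 r2 : ringstr B)
    (h1 : {rmorphism R -> rring r1}) (h2 : {rmorphism R -> rring r2}) :
  h1 =1 h2 -> (forall b, exists a, h1 a = b) -> r1 = r2.
Proof.
move=> h12 h1_surj; apply: ringstr_ext.
- by have := rmorph0 h1; rewrite h12 rmorph0.
- by have := rmorph1 h1; rewrite h12 rmorph1.
- move=> b c; have [x <-] := h1_surj b; have [y <-] := h1_surj c.
  by rewrite -[radd _ _ _]/(h1 x + h1 y) -rmorphD !h12 rmorphD.
- move=> b; have [x <-] := h1_surj b.
  by rewrite -[ropp _ _]/(- h1 x) -rmorphN !h12 rmorphN.
- move=> b c; have [x <-] := h1_surj b; have [y <-] := h1_surj c.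
  by rewrite -[rmul _ _ _]/(h1 x * h1 y) -rmorphM !h12 rmorphM.
Qed.

Lemma ringstr_eq_rmorph_inj (A : finType) (r1 r2 : ringstr A) (I : Type)
    (L : I -> comPzRingType) (h1 : forall i, {rmorphism rring r1 -> L i})
    (h2 : forall i, {rmorphism rring r2 -> L i}) :
  (forall i, h1 i =1 h2 i) -> (forall x y, (forall i, h1 i x = h1 i y) -> x = y) ->
  r1 = r2.
Proof.
move=> h12 h1_inj; apply: ringstr_ext.
- by apply: h1_inj => i; rewrite [RHS]h12 !rmorph0.
- by apply: h1_inj => i; rewrite [RHS]h12 !rmorph1.
- move=> x y; apply: h1_inj => i.
  by rewrite [RHS]h12 !rmorphD -!h12.
- move=> x; apply: h1_inj => i.
  by rewrite [RHS]h12 !rmorphN -!h12.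
- move=> x y; apply: h1_inj => i.
  by rewrite [RHS]h12 !rmorphM -!h12.
Qed.

Section TransportRingstr.
Variables (A : finType) (K : comPzRingType) (e : A -> K) (d : K -> A).
Hypotheses (eK : cancel e d) (dK : cancel d e).

Definition transport_ringstr : ringstr A.
Proof.
refine (@RingStr A (d 0) (d 1) (fun a b => d (e a + e b)) (fun a => d (- e a))
   (fun a b => d (e a * e b)) _ _ _ _ _ _ _ _).
- by move=> a b c; rewrite !dK addrA.
- by move=> a b; rewrite addrC.
- by move=> a; rewrite !dK add0r eK.
- by move=> a; rewrite !dK addNr.
- by move=> a b c; rewrite !dK mulrA.
- by move=> a b; rewrite mulrC.
- by move=> a; rewrite !dK mul1r eK.
- by move=> a b c; rewrite !dK mulrDl.
Defined.

Fact transport_zmod_morphism : zmod_morphism (e : rring transport_ringstr -> K).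
Proof. by move=> a b /=; rewrite !dK. Qed.

Fact transport_monoid_morphism : monoid_morphism (e : rring transport_ringstr -> K).
Proof. by split=> [|a b] /=; rewrite dK. Qed.

Definition transport_rmorph : {rmorphism rring transport_ringstr -> K} :=
  rmorph_of transport_zmod_morphism transport_monoid_morphism.

Definition transport_rmorph_inv : {rmorphism K -> rring transport_ringstr} :=
  @inv_rmorph _ _ transport_rmorph d eK dK.

End TransportRingstr.

Definition is_field (K : comPzRingType) : Prop :=
  (1 != 0 :> K) /\ forall x : K, x != 0 -> exists y, x * y = 1.

Lemma is_field_charp_field (p : nat) (K : comPzRingType) : is_field_charp p K -> is_field K.
Proof. by case. Qed.

Lemma finField_is_field_charp (p : nat) (K : finFieldType) :
  p \in [pchar K] -> is_field_charp p K.
Proof.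
case/andP=> _ /eqP pK0; split=> //; first exact: oner_neq0.
by move=> x x_neq0; exists x^-1; rewrite mulfV.
Qed.

Lemma is_field_charp_can (p : nat) (A B : comPzRingType) (f : {rmorphism A -> B})
    (g : B -> A) :
  cancel f g -> cancel g f -> is_field_charp p B -> is_field_charp p A.
Proof.
move=> fK gK [B_nz B_inv B_char]; split.
- by apply: contra B_nz => /eqP A10; rewrite -(rmorph1 f) A10 rmorph0.
- move=> x x_neq0; have /B_inv[y xy] : f x != 0 by rewrite -(rmorph0 f) (can_eq fK).
  by exists (g y); apply: (can_inj fK); rewrite rmorphM gK xy rmorph1.
- by apply: (can_inj fK); rewrite rmorph_nat B_char rmorph0.
Qed.

Definition charp_field (p : nat) (S : finType) (r : ringstr S)
  of is_field_charp p (rring r) : Type := rring r.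

Section CharpField.
Variables (p : nat) (S : finType) (r : ringstr S) (r_field : is_field_charp p (rring r)).
Local Notation F := (charp_field r_field).

HB.instance Definition _ := Finite.on F.
HB.instance Definition _ := GRing.ComPzRing.on F.

Fact charp_field_nonzero : (1 : F) != 0. Proof. by case: r_field. Qed.
HB.instance Definition _ := GRing.PzSemiRing_isNonZero.Build F charp_field_nonzero.

Definition charp_field_inv (x : F) : F := if [pick y | x * y == 1] is Some y then y else 0.

Fact charp_field_mulVf (x : F) : x != 0 -> charp_field_inv x * x = 1.
Proof.
move=> x_neq0; rewrite /charp_field_inv; case: pickP => [y /eqP <-|no_inv].
  by rewrite mulrC.
by case: r_field => _ /(_ x x_neq0) [y xy] _; move: (no_inv y); rewrite xy eqxx.
Qed.

Fact charp_field_inv0 : charp_field_inv 0 = 0.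
Proof.
rewrite /charp_field_inv; case: pickP => [y|//]; rewrite mul0r eq_sym => /eqP F10.
by move: charp_field_nonzero; rewrite F10 eqxx.
Qed.

HB.instance Definition _ :=
  GRing.ComNzRing_isField.Build F charp_field_mulVf charp_field_inv0.

Lemma charp_field_pchar : prime p -> p \in [pchar F].
Proof. by move=> p_pr; apply/andP; split=> //; apply/eqP; case: r_field. Qed.

End CharpField.

(** * Finite products of rings and of fields *)

Section FinProdRing.
Variables (n : nat) (L : 'I_n -> comPzRingType).

Definition prod_ring := {dffun forall i, L i}.
HB.instance Definition _ := Choice.on prod_ring.

Definition prod_ring0 : prod_ring := [ffun i => 0].
Definition prod_ring1 : prod_ring := [ffun i => 1].
Definition prod_ring_add (f g : prod_ring) : prod_ring := [ffun i => f i + g i].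
Definition prod_ring_opp (f : prod_ring) : prod_ring := [ffun i => - f i].
Definition prod_ring_mul (f g : prod_ring) : prod_ring := [ffun i => f i * g i].

Fact prod_ring_addA : associative prod_ring_add.
Proof. by move=> f g h; apply/ffunP => i; rewrite !ffunE addrA. Qed.
Fact prod_ring_addC : commutative prod_ring_add.
Proof. by move=> f g; apply/ffunP => i; rewrite !ffunE addrC. Qed.
Fact prod_ring_add0 : left_id prod_ring0 prod_ring_add.
Proof. by move=> f; apply/ffunP => i; rewrite !ffunE add0r. Qed.
Fact prod_ring_addN : left_inverse prod_ring0 prod_ring_opp prod_ring_add.
Proof. by move=> f; apply/ffunP => i; rewrite !ffunE addNr. Qed.
HB.instance Definition _ := GRing.isZmodule.Build prod_ring
  prod_ring_addA prod_ring_addC prod_ring_add0 prod_ring_addN.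

Fact prod_ring_mulA : associative prod_ring_mul.
Proof. by move=> f g h; apply/ffunP => i; rewrite !ffunE mulrA. Qed.
Fact prod_ring_mulC : commutative prod_ring_mul.
Proof. by move=> f g; apply/ffunP => i; rewrite !ffunE mulrC. Qed.
Fact prod_ring_mul1 : left_id prod_ring1 prod_ring_mul.
Proof. by move=> f; apply/ffunP => i; rewrite !ffunE mul1r. Qed.
Fact prod_ring_mulD : left_distributive prod_ring_mul prod_ring_add.
Proof. by move=> f g h; apply/ffunP => i; rewrite !ffunE mulrDl. Qed.
HB.instance Definition _ := GRing.Zmodule_isComPzRing.Build prod_ring
  prod_ring_mulA prod_ring_mulC prod_ring_mul1 prod_ring_mulD.

Section Projection.
Variable i : 'I_n.

Fact proj_zmod_morphism : zmod_morphism (fun x : prod_ring => x i).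
Proof. by move=> x y; rewrite !ffunE. Qed.

Fact proj_monoid_morphism : monoid_morphism (fun x : prod_ring => x i).
Proof. by split=> [|x y]; rewrite ffunE. Qed.

Definition proj_rmorph : {rmorphism prod_ring -> L i} :=
  rmorph_of proj_zmod_morphism proj_monoid_morphism.

Lemma proj_rmorphE x : proj_rmorph x = x i. Proof. by []. Qed.

End Projection.

Lemma proj_rmorph_jointly_bijective : jointly_bijective proj_rmorph.
Proof.
split=> [x y xy|y]; first by apply/ffunP => i; apply: xy.
by exists [ffun i => y i] => i; rewrite proj_rmorphE ffunE.
Qed.

Section Tupling.
Variables (P : comPzRingType) (q : forall i, {rmorphism P -> L i}).

Fact tuple_zmod_morphism : zmod_morphism (fun x => [ffun i => q i x] : prod_ring).
Proof. by move=> x y; apply/ffunP => i; rewrite !ffunE rmorphB. Qed.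

Fact tuple_monoid_morphism : monoid_morphism (fun x => [ffun i => q i x] : prod_ring).
Proof. by split=> [|x y]; apply/ffunP => i; rewrite !ffunE (rmorph1, rmorphM). Qed.

Definition tuple_rmorph : {rmorphism P -> prod_ring} :=
  rmorph_of tuple_zmod_morphism tuple_monoid_morphism.

Lemma tuple_rmorphE x i : tuple_rmorph x i = q i x. Proof. by rewrite ffunE. Qed.

End Tupling.

End FinProdRing.

Definition single (n : nat) (L : 'I_n -> comPzRingType) (i : 'I_n) (w : L i) (k : 'I_n) : L k :=
  if i =P k is ReflectT ik then eq_rect i L w k ik else 0.

Lemma single_id n L i w : @single n L i w i = w.
Proof. by rewrite /single; case: eqP => [ii|//]; rewrite (eq_axiomK ii). Qed.

Lemma single_ne n L i w k : i != k -> @single n L i w k = 0.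
Proof. by rewrite /single; case: eqP. Qed.

Lemma jointly_bijective_surj (P : comPzRingType) (n : nat) (L : 'I_n -> comPzRingType)
    (q : forall i, {rmorphism P -> L i}) :
  jointly_bijective q -> forall i w, exists x, q i x = w.
Proof.
case=> _ q_surj i w; have [x qx] := q_surj (single w).
by exists x; rewrite qx single_id.
Qed.

Lemma jointly_bijective_head_tail (P : comPzRingType) (n : nat)
    (L : 'I_n.+1 -> comPzRingType) (q : forall i, {rmorphism P -> L i}) :
  jointly_bijective q ->
  bijective (fun x => (q ord0 x, tuple_rmorph (fun j => q (lift ord0 j)) x)).
Proof.
move=> [q_inj q_surj]; apply: inj_surj_bijective => [x y [E0 /ffunP Etail]|[a b]].
  apply: q_inj => k; case: (unliftP ord0 k) => [j ->|->] //.
  by have := Etail j; rewrite !tuple_rmorphE.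
pose y : forall i, L i := fun i => single (L := L) a i + \sum_(j < n) single (L := L) (b j) i.
have [x qx] := q_surj y; exists x; congr pair.
  rewrite qx /y single_id big1 ?addr0 // => j _.
  by rewrite single_ne // eq_sym neq_lift.
apply/ffunP => j; rewrite tuple_rmorphE qx /y single_ne ?neq_lift // add0r.
rewrite (bigD1 j) //= single_id big1 ?addr0 // => k kj.
by rewrite single_ne // (inj_eq lift_inj).
Qed.

Section FunctorFacts.
Variable X : CRingFunctor.

Lemma Fmap_ext (R S : comPzRingType) (f g : {rmorphism R -> S}) :
  f =1 g -> Fmap f =1 Fmap (c := X) g.
Proof. by move=> /rmorph_ext ->. Qed.

Lemma Fmap_compE (R S T : comPzRingType) (f : {rmorphism R -> S})
    (g : {rmorphism S -> T}) (h : {rmorphism R -> T}) :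
  h =1 g \o f -> forall x : X R, Fmap h x = Fmap g (Fmap f x).
Proof. by move=> hE x; rewrite -Fmap_comp; apply: Fmap_ext. Qed.

Lemma Fmap_idE (R : comPzRingType) (h : {rmorphism R -> R}) :
  h =1 id -> forall x : X R, Fmap h x = x.
Proof. by move=> hE x; rewrite -[RHS](Fmap_id (c := X)); apply: Fmap_ext. Qed.

Lemma Fmap_inv_rmorphK (R S : comPzRingType) (f : {rmorphism R -> S}) g fK gK :
  cancel (Fmap f) (Fmap (c := X) (@inv_rmorph R S f g fK gK)).
Proof. by move=> x; rewrite -Fmap_comp Fmap_idE // => y /=; rewrite fK. Qed.

End FunctorFacts.

Lemma Fmap_jointly_bijective (X : CRingFunctor) (n : nat) (P : comPzRingType)
    (L : 'I_n -> comPzRingType) (q : forall i, {rmorphism P -> L i}) :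
  preserves_products X -> jointly_bijective q ->
  jointly_bijective (fun i => Fmap (c := X) (q i)).
Proof.
case=> X_terminal X_binary; elim: n P L q => [|n IHn] P L q q_bij.
  have P10 : 1 = 0 :> P by case: q_bij => q_inj _; apply: q_inj => -[].
  have [pt ptE] := X_terminal P P10.
  by split=> [x y _|y]; [rewrite (ptE x) (ptE y) | exists pt => -[]].
pose t := tuple_rmorph (fun j => q (lift ord0 j)).
have [g gK Kg] := X_binary _ _ _ _ t (jointly_bijective_head_tail q_bij).
have [IH_inj IH_surj] := IHn _ _ _ (proj_rmorph_jointly_bijective (fun j => L (lift ord0 j))).
have qE j x : Fmap (q (lift ord0 j)) x = Fmap (proj_rmorph _ j) (Fmap t x).
  by apply: Fmap_compE => y /=; rewrite tuple_rmorphE.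
split=> [x y xy|y].
  apply: (can_inj gK); congr pair; first exact: xy.
  by apply: IH_inj => j; rewrite -!qE xy.
have [w wE] := IH_surj (fun j => y (lift ord0 j)).
exists (g (y ord0, w)) => k; case: (Kg (y ord0, w)) => head_gE tail_gE.
by case: (unliftP ord0 k) => [j ->|->]; rewrite ?qE ?tail_gE.
Qed.

Section ProductOfFields.
Variables (R : comPzRingType) (n : nat) (L : 'I_n -> comPzRingType)
  (q : forall i, {rmorphism R -> L i}).
Hypotheses (L_field : forall i, is_field (L i)) (q_bij : jointly_bijective q).

Lemma proj_idempotents : exists e : 'I_n -> R, forall i k, q k (e i) = if k == i then 1 else 0.
Proof.
case: q_bij => _ q_surj.
apply: (functional_choice (fun i x => forall k, q k x = if k == i then 1 else 0)) => i.
by have [x qx] := q_surj (fun k => if k == i then 1 else 0); exists x.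
Qed.

Lemma rmorph_field_ker (K : comPzRingType) (psi : {rmorphism R -> K}) :
  is_field K -> exists i, forall x, (psi x == 0) = (q i x == 0).
Proof.
case=> K_nz K_inv; case: (q_bij) => q_inj _; have [e eE] := proj_idempotents.
have e_sum : \sum_i e i = 1.
  apply: q_inj => k; rewrite rmorph_sum rmorph1 (bigD1 k) //= eE eqxx big1 ?addr0 //.
  by move=> j jk; rewrite eE eq_sym (negbTE jk).
have e_idem i : e i * e i = e i.
  by apply: q_inj => k; rewrite rmorphM eE; case: (k == i); rewrite ?mulr1 ?mulr0.
have [i psi_ei] : exists i, psi (e i) != 0.
  apply/existsP; apply: contraNT K_nz => /existsPn psi_e0; apply/eqP.
  by rewrite -(rmorph1 psi) -e_sum rmorph_sum big1 // => j _; apply/eqP/negPn.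
have psi_ei1 : psi (e i) = 1.
  have [w ew] := K_inv _ psi_ei.
  by rewrite -ew -{2}e_idem rmorphM -mulrA ew mulr1.
exists i => x; apply/eqP/eqP => [psi_x0|qx0].
  apply/eqP; apply: contraTT K_nz => /(L_field i).2[w xw]; apply/negPn/eqP.
  have [y qy] := jointly_bijective_surj q_bij w.
  have xye : x * y * e i = e i.
    apply: q_inj => k; rewrite !rmorphM eE; case: eqP => [->|]; last by rewrite !mulr0.
    by rewrite qy xw mulr1.
  by rewrite -psi_ei1 -xye !rmorphM psi_x0 !mul0r.
have xe0 : x * e i = 0.
  apply: q_inj => k; rewrite rmorphM eE rmorph0; case: eqP => [->|]; last by rewrite mulr0.
  by rewrite qx0 mul0r.
by rewrite -[psi x]mulr1 -psi_ei1 -rmorphM xe0 rmorph0.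
Qed.

Lemma proj_ker_inj i j : (forall x, (q i x == 0) = (q j x == 0)) -> i = j.
Proof.
move=> ker_ij; have [e eE] := proj_idempotents; apply/eqP; apply: contraTT isT => ij.
have := ker_ij (e j); rewrite !eE eqxx (negbTE ij) eqxx => /esym.
by case: (L_field j) => /negbTE ->.
Qed.

End ProductOfFields.

Lemma proj_ker_matching (R : comPzRingType) (n m : nat)
    (L : 'I_n -> comPzRingType) (q : forall i, {rmorphism R -> L i})
    (L' : 'I_m -> comPzRingType) (q' : forall j, {rmorphism R -> L' j}) :
  (forall i, is_field (L i)) -> jointly_bijective q ->
  (forall j, is_field (L' j)) -> jointly_bijective q' ->
  exists2 sg : 'I_m -> 'I_n, injective sg &
    forall j x y, q' j x = q' j y <-> q (sg j) x = q (sg j) y.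
Proof.
move=> L_field q_bij L'_field q'_bij.
have [sg sgE] := functional_choice (fun j i => forall x, (q' j x == 0) = (q i x == 0))
  (fun j => rmorph_field_ker L_field q_bij (q' j) (L'_field j)).
exists sg => [j j' sg_jj'|j x y].
  by apply: (proj_ker_inj L'_field q'_bij) => x; rewrite !sgE sg_jj'.
by split=> /eqP; rewrite -subr_eq0 -rmorphB (sgE, =^~ sgE) rmorphB subr_eq0 => /eqP.
Qed.

(** * Partitions and cartesian decompositions *)

Section Blocks.
Variables (S : finType) (P : {set {set S}}) (hP : partition P [set: S]).

Fact mem_cover_partition s : s \in cover P.
Proof. by rewrite (cover_partition hP) inE. Qed.

Definition block_of (s : S) : blocks P :=
  exist _ (pblock P s) (pblock_mem (mem_cover_partition s)).

Lemma mem_block_of s : s \in val (block_of s).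
Proof. by rewrite mem_pblock mem_cover_partition. Qed.

Lemma block_ofP (B : blocks P) s : s \in val B -> block_of s = B.
Proof. by move=> sB; apply: val_inj; apply: def_pblock (partition_trivIset hP) (valP B) sB. Qed.

Lemma mem_pblock_block_of s t : (t \in pblock P s) = (block_of t == block_of s).
Proof.
by rewrite -val_eqE /= eq_sym eq_pblock ?mem_cover_partition ?(partition_trivIset hP).
Qed.

Lemma block_of_surj (B : blocks P) : exists s, block_of s = B.
Proof.
have /set0Pn[s sB] : val B != set0 := partition_neq0 hP (valP B).
by exists s; apply: block_ofP.
Qed.

End Blocks.

Lemma partition_eq_pblock (S : finType) (P Q : {set {set S}}) :
  partition P [set: S] -> partition Q [set: S] -> pblock P =1 pblock Q -> P = Q.
Proof.
move=> hP hQ /functional_extensionality PQ.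
by rewrite -(preim_partition_pblock hP) -(preim_partition_pblock hQ) PQ.
Qed.

Section Fibres.
Variables (S : finType) (rT : eqType) (f : S -> rT).
Local Notation hF := (preim_partitionP f [set: S]).

Lemma mem_block_of_preim s t : (t \in val (block_of hF s)) = (f s == f t).
Proof.
apply: pblock_equivalence_partition; rewrite ?inE // => x y z _ _ _.
by split=> // /eqP->.
Qed.

Lemma block_of_preim_eq s t : (block_of hF s = block_of hF t) <-> f s = f t.
Proof.
split=> [st|/eqP st]; last by apply: block_ofP; rewrite mem_block_of_preim eq_sym.
by apply/eqP; rewrite -mem_block_of_preim st mem_block_of.
Qed.

End Fibres.

Lemma jointly_bijective_fibres (S : finType) (I : Type) (B : I -> eqType)
    (f : forall i, S -> B i) :
  jointly_bijective f ->
  jointly_bijective (fun i => block_of (preim_partitionP (f i) [set: S])).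
Proof.
case=> f_inj f_surj; split=> [s t st|C].
  by apply: f_inj => i; apply/block_of_preim_eq/st.
have [r rE] := dependent_choice (fun i =>
  block_of_surj (preim_partitionP (f i) [set: S]) (C i)).
have [s sE] := f_surj (fun i => f i (r i)).
by exists s => i; rewrite -rE; apply/block_of_preim_eq/sE.
Qed.

Section ImagePartition.
Variables (S T : finType) (g : S -> T) (g_bij : bijective g).
Variables (P : {set {set S}}) (hP : partition P [set: S]).
Let g_inj := bij_inj g_bij.

Lemma partition_imset : partition [set g @: (B : {set S}) | B in P] [set: T].
Proof.
apply/and3P; split.
- apply/eqP/setP => t; rewrite inE; apply/bigcupP.
  have [g' _ g'K] := g_bij; rewrite -[t]g'K.
  exists (g @: val (block_of hP (g' t))); first exact/imset_f/valP.
  by rewrite mem_imset ?mem_block_of.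
- apply/trivIsetP => _ _ /imsetP[A AP ->] /imsetP[B BP ->] gAB.
  have AB : A != B by apply: contraNneq gAB => ->.
  have /eqP AB0 : A :&: B == set0.
    by rewrite setI_eq0; apply: (elimT trivIsetP (partition_trivIset hP)).
  by rewrite -setI_eq0 -imsetI ?AB0 ?imset0 // => x y _ _; apply: g_inj.
- apply/imsetP => -[B BP /esym/eqP]; rewrite imset_eq0 => /eqP B0.
  by rewrite B0 (partition0 hP) in BP.
Qed.

Definition block_imset (B : blocks P) : blocks [set g @: (B : {set S}) | B in P] :=
  exist _ (g @: val B) (imset_f _ (valP B)).

Lemma block_imset_bij : bijective block_imset.
Proof.
apply: inj_surj_bijective => [B C /(congr1 val)/imset_inj BC|C].
  by apply/val_inj/BC.
have /imsetP[B BP CB] := valP C.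
by exists (exist _ B BP); apply: val_inj.
Qed.

Lemma block_of_imset s :
  block_of partition_imset (g s) = block_imset (block_of hP s).
Proof. by apply: block_ofP; rewrite /= mem_imset ?mem_block_of. Qed.

End ImagePartition.

Section Cartesian.
Variables (S : finType) (n : nat) (P : 'I_n -> {set {set S}}).
Hypothesis hP : forall i, partition (P i) [set: S].

Lemma cartesianP :
  (forall B : (forall i, blocks (P i)), #|\bigcap_(i < n) val (B i)| = 1%N) <->
  jointly_bijective (fun i => block_of (hP i)).
Proof.
split=> [cart | [b_inj b_surj] B].
  split=> [s t st|B].
    have /eqP/cards1P[u uE] := cart (fun i => block_of (hP i) s).
    have in_cap v : (forall i, v \in val (block_of (hP i) s)) -> v = u.
      by move=> vB; apply/set1P; rewrite -uE; apply/bigcapP => i _.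
    rewrite (in_cap s (fun i => mem_block_of _ _)) (in_cap t) // => i.
    by rewrite st mem_block_of.
  have /eqP/cards1P[u uE] := cart B.
  have /bigcapP uB : u \in \bigcap_(i < n) val (B i) by rewrite uE set11.
  by exists u => i; apply: block_ofP; apply: uB.
have [s sB] := b_surj B; apply/eqP/cards1P; exists s; apply/setP => t.
rewrite inE; apply/bigcapP/eqP => [tB|-> i _]; last by rewrite -sB mem_block_of.
by apply: b_inj => i; rewrite sB; apply: block_ofP; apply: tB.
Qed.

End Cartesian.

(** * Z-structures as factorizations into F-structures *)

Section Orbits.
Variables (F : finType -> Type) (n : nat) (S : finType).
Local Notation family := {parts : 'I_n -> {set {set S}} & forall i, F (blocks (parts i))}.

Definition dp_family (x : dprodn F n S) : family := existT _ (dp_part x) (dp_str x).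

Definition reindex (s : 'I_n -> 'I_n) (w : family) : family :=
  existT _ (fun i => projT1 w (s i)) (fun i => projT2 w (s i)).

Lemma eq_reindex s s' w : s =1 s' -> reindex s w = reindex s' w.
Proof. by move=> /functional_extensionality ->. Qed.

Lemma dp_orbitP (x y : dprodn F n S) :
  dp_orbit x y <-> exists s : 'S_n, dp_family y = reindex s (dp_family x).
Proof. by []. Qed.

Lemma dp_orbit_refl (x : dprodn F n S) : dp_orbit x x.
Proof. by apply/dp_orbitP; exists 1%g; rewrite (@eq_reindex _ id _ (fun i => perm1 i)). Qed.

Lemma dp_orbit_sym (x y : dprodn F n S) : dp_orbit x y -> dp_orbit y x.
Proof.
move=> /dp_orbitP[s ys]; apply/dp_orbitP; exists s^-1%g.
by rewrite ys -[reindex _ _]/(reindex (s \o s^-1%g) _) (@eq_reindex _ id _ (permKV s)).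
Qed.

Lemma dp_orbit_trans (x y w : dprodn F n S) : dp_orbit x y -> dp_orbit y w -> dp_orbit x w.
Proof.
move=> /dp_orbitP[s ys] /dp_orbitP[t wt]; apply/dp_orbitP; exists (t * s)%g.
rewrite wt ys -[reindex t _]/(reindex (s \o t) _).
by rewrite (@eq_reindex _ _ _ (fun i => esym (permM t s i))).
Qed.

End Orbits.

Section Factors.
Variables (X : CRingFunctor) (p : nat) (S : finType).
Local Notation F := (Fstr X p).

(* [f] is the residue field of [z] whose elements are the blocks of [P],
   with the point of [X] induced by [z]. *)
Definition field_factor (z : Zstr X p S) (P : {set {set S}}) (f : F (blocks P)) : Prop :=
  exists h : {rmorphism rring (z_ring z) -> rring (f_ring f)},
    (forall s, s \in val (h s : blocks P)) /\ Fmap h (z_pt z) = f_pt f.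

Definition factorization (z : Zstr X p S) (n : nat) (x : dprodn F n S) : Prop :=
  forall i, field_factor z (dp_str x i).

Lemma field_factor_uniq (z : Zstr X p S) (P : {set {set S}}) (f1 f2 : F (blocks P)) :
  partition P [set: S] -> field_factor z f1 -> field_factor z f2 -> f1 = f2.
Proof.
case: f1 f2 => r1 r1_field pt1 [r2 r2_field pt2] hP [h1 [h1P /= h1pt]] [h2 [h2P /= h2pt]].
have h1E : h1 =1 block_of hP by move=> s; apply/esym/block_ofP/h1P.
have h12 : h1 =1 h2 by move=> s; rewrite h1E; apply/block_ofP/h2P.
have h1_surj B : exists s, h1 s = B.
  by have [s <-] := block_of_surj hP B; exists s; apply: h1E.
have r12 : r1 = r2 := ringstr_eq_rmorph_surj h12 h1_surj.
subst r2; rewrite (proof_irrelevance _ r1_field r2_field) -h1pt -h2pt.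
by congr FStr; apply: Fmap_ext.
Qed.

Lemma field_factor_of_rmorph (z : Zstr X p S) (K : finFieldType)
    (psi : {rmorphism rring (z_ring z) -> K}) :
  p \in [pchar K] -> (forall k, exists s, psi s = k) ->
  exists f : F (blocks (preim_partition (fun s : S => psi s) [set: S])), field_factor z f.
Proof.
move=> K_pchar /(functional_choice (fun k s => psi s = k))[sec secK].
pose hF := preim_partitionP (fun s : S => psi s) [set: S].
have [rep repK] := functional_choice _ (block_of_surj hF).
pose d k := block_of hF (sec k); pose e B := psi (rep B).
have d_psi s : d (psi s) = block_of hF s by apply/block_of_preim_eq; rewrite secK.
have eK : cancel e d by move=> B; rewrite /e d_psi repK.
have dK : cancel d e by move=> k; rewrite /e -[RHS]secK; apply/block_of_preim_eq; rewrite repK.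
have r_field := is_field_charp_can (f := transport_rmorph eK dK) eK dK
  (finField_is_field_charp K_pchar).
pose h := (transport_rmorph_inv eK dK \o psi : {rmorphism _ -> _}).
exists (FStr r_field (Fmap h (z_pt z))), h; split=> // s.
by rewrite -[h s]/(d (psi s)) d_psi; apply: mem_block_of.
Qed.

Lemma factorization_exists (z : Zstr X p S) :
  exists nx : {n & dprodn F n S}, factorization z (projT2 nx).
Proof.
have [n [K [phi [K_pchar phi_inj phi_surj]]]] := z_prod z.
have phi_bij : jointly_bijective phi := conj phi_inj phi_surj.
have [f fP] := dependent_choice (fun i =>
  field_factor_of_rmorph (K_pchar i) (jointly_bijective_surj phi_bij (i := i))).
pose hP i := preim_partitionP (fun s : S => phi i s) [set: S].
have := jointly_bijective_fibres (f := fun i (s : S) => phi i s) phi_bij.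
move=> /(cartesianP hP) cart.
by exists (existT _ n (DProd hP cart f)).
Qed.

Lemma factorization_rmorphs (z : Zstr X p S) n (x : dprodn F n S) :
  factorization z x ->
  exists h : forall i, {rmorphism rring (z_ring z) -> rring (f_ring (dp_str x i))},
    [/\ forall i, h i =1 block_of (dp_partition x i),
        forall i, Fmap (h i) (z_pt z) = f_pt (dp_str x i)
      & jointly_bijective h].
Proof.
move=> /dependent_choice[h hP]; exists h.
have hE i : h i =1 block_of (dp_partition x i).
  by move=> s; apply/esym/block_ofP; case: (hP i).
split=> [//|i|]; first by case: (hP i).
have := (cartesianP (dp_partition x)).1 (@dp_cart _ _ _ x).
by apply: eq_jointly_bijective => i s; rewrite hE.
Qed.

Lemma factorization_part_matching (z : Zstr X p S) n m (x : dprodn F n S)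
    (y : dprodn F m S) :
  factorization z x -> factorization z y ->
  exists2 sg : 'I_m -> 'I_n, injective sg & forall j, dp_part y j = dp_part x (sg j).
Proof.
move=> /factorization_rmorphs[hx [hxE _ hx_bij]] /factorization_rmorphs[hy [hyE _ hy_bij]].
have field_x i := is_field_charp_field (f_field (dp_str x i)).
have field_y j := is_field_charp_field (f_field (dp_str y j)).
have [sg sg_inj sgE] := proj_ker_matching field_x hx_bij field_y hy_bij.
exists sg => // j; apply: partition_eq_pblock (dp_partition y j) (dp_partition x _) _ => s.
apply/setP => t; rewrite (mem_pblock_block_of (dp_partition y j)).
rewrite (mem_pblock_block_of (dp_partition x (sg j))).
by apply/eqP/eqP; rewrite -!hyE -!hxE => /sgE.
Qed.

Lemma factorization_size (z : Zstr X p S) n m (x : dprodn F n S) (y : dprodn F m S) :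
  factorization z x -> factorization z y -> n = m.
Proof.
move=> zx zy; have [sg sg_inj _] := factorization_part_matching zx zy.
have [sg' sg'_inj _] := factorization_part_matching zy zx.
have := leq_card _ sg_inj; have := leq_card _ sg'_inj; rewrite !card_ord => nm mn.
by apply/eqP; rewrite eqn_leq nm mn.
Qed.

Lemma factorization_orbit (z : Zstr X p S) n (x y : dprodn F n S) :
  factorization z x -> factorization z y -> dp_orbit x y.
Proof.
move=> zx zy; have [sg sg_inj sgE] := factorization_part_matching zx zy.
exists (perm sg_inj); case: y zy sgE => Py hPy cart_y fy /= zy sgE.
have PyE : Py = fun j => dp_part x (perm sg_inj j).
  by apply: functional_extensionality => j; rewrite permE sgE.
subst Py; congr existT; apply: functional_extensionality_dep => j.
exact: field_factor_uniq (dp_partition x _) (zy j) (zx _).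
Qed.

Lemma factorization_orbit_closed (z : Zstr X p S) n (x y : dprodn F n S) :
  factorization z x -> dp_orbit x y -> factorization z y.
Proof.
move=> zx /dp_orbitP[s ys].
suff : forall i, field_factor z (projT2 (dp_family y) i) by [].
by rewrite ys => i; apply: zx.
Qed.

Lemma factorization_inj (z z' : Zstr X p S) n (x : dprodn F n S) :
  preserves_products X -> factorization z x -> factorization z' x -> z = z'.
Proof.
case: z z' => r r_prod pt [r' r'_prod pt'] hX.
move=> /factorization_rmorphs[h [hE hpt h_bij]] /factorization_rmorphs[h' [h'E h'pt _]] /=.
have hh' i : h i =1 h' i by move=> s; rewrite hE h'E.
have rr' : r = r' := ringstr_eq_rmorph_inj hh' h_bij.1.
subst r'; rewrite (proof_irrelevance _ r_prod r'_prod); congr ZStr.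
apply: (Fmap_jointly_bijective hX h_bij).1 => i.
by rewrite hpt (Fmap_ext (hh' i)) h'pt.
Qed.

Lemma factorization_surj n (x : dprodn F n S) :
  preserves_products X -> prime p -> exists z, factorization z x.
Proof.
move=> hX p_prime; pose L i := rring (f_ring (dp_str x i)).
have b_bij := (cartesianP (dp_partition x)).1 (@dp_cart _ _ _ x).
pose Phi s : prod_ring L := [ffun i => block_of (dp_partition x i) s].
have [Psi PhiK PsiK] : bijective Phi.
  apply: inj_surj_bijective => [s t /ffunP st|y].
    by apply: b_bij.1 => i; have := st i; rewrite !ffunE.
  have [s sE] := b_bij.2 (fun i => y i).
  by exists s; apply/ffunP => i; rewrite ffunE sE.
pose q i := (proj_rmorph L i \o transport_rmorph PhiK PsiK : {rmorphism _ -> L i}).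
have qE i s : q i s = block_of (dp_partition x i) s by rewrite /= ffunE.
have q_bij : jointly_bijective q by apply: eq_jointly_bijective b_bij => i s; rewrite qE.
have r_prod : fin_prod_ffields p (rring (transport_ringstr PhiK PsiK)).
  pose K i := charp_field (f_field (dp_str x i)).
  pose qK i := rmorph_of (f := q i : _ -> K i) (rmorphB (q i)) (rmorphism_monoidP (q i)).
  exists n, K, qK.
  by split; [move=> i; apply: charp_field_pchar p_prime | exact: q_bij.1 | exact: q_bij.2].
have [pt ptE] := (Fmap_jointly_bijective hX q_bij).2 (fun i => f_pt (dp_str x i)).
by exists (ZStr r_prod pt) => i; exists (q i); split=> // s; rewrite qE; apply: mem_block_of.
Qed.

End Factors.

Section Transport.
Variables (X : CRingFunctor) (p : nat).
Local Notation F := (Fstr X p).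

Lemma Fstr_transport (A B : finType) (b : A -> B) :
  bijective b -> forall f : F A, exists f' : F B, Ftr b f f'.
Proof.
case=> b' bK b'K f; pose K := rring (f_ring f).
have r'_field := is_field_charp_can (f := transport_rmorph (K := K) b'K bK) b'K bK (f_field f).
pose hb := transport_rmorph_inv (K := K) b'K bK.
by exists (FStr r'_field (Fmap hb (f_pt f))), hb.
Qed.

Variables (S T : finType) (g : S -> T) (g_bij : bijective g).
Variables (z : Zstr X p S) (z' : Zstr X p T) (zz' : Ztr g z z').

Lemma field_factor_transport (P : {set {set S}}) (f : F (blocks P))
    (f' : F (blocks [set g @: (B : {set S}) | B in P])) :
  field_factor z f -> Ftr (@block_imset _ _ g P) f f' -> field_factor z' f'.
Proof.
case: zz' => hz [hzE hz_pt] [h [h_mem h_pt]] [hb [hbE hb_pt]].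
have [g' gK g'K] := g_bij.
have hzK : cancel hz g' by move=> s; rewrite hzE gK.
have hzK' : cancel g' hz by move=> t; rewrite hzE g'K.
exists (hb \o h \o inv_rmorph hzK hzK' : {rmorphism _ -> _}); split.
  by move=> t; rewrite /= hbE; apply/imsetP; exists (g' t); rewrite ?g'K ?h_mem.
rewrite (Fmap_compE (f := inv_rmorph hzK hzK') (g := hb \o h : {rmorphism _ -> _})) //.
by rewrite (Fmap_compE (f := h) (g := hb)) // -hz_pt Fmap_inv_rmorphK h_pt hb_pt.
Qed.

Lemma factorization_transport n (x : dprodn F n S) :
  factorization z x -> exists y : dprodn F n T, factorization z' y /\ dp_tr (@Ftr X p) g x y.
Proof.
move=> zx; pose hP' i := partition_imset g_bij (dp_partition x i).
have [f' f'E] := dependent_choice (fun i =>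
  Fstr_transport (block_imset_bij g_bij (dp_part x i)) (dp_str x i)).
have blocks_bij : jointly_bijective (fun i => block_of (hP' i)).
  have [g' gK g'K] := g_bij.
  have := (cartesianP (dp_partition x)).1 (@dp_cart _ _ _ x).
  move=> /(jointly_bijective_postcomp (fun i => block_imset_bij g_bij (dp_part x i))).
  move=> /(jointly_bijective_precomp (Bijective g'K gK)).
  by apply: eq_jointly_bijective => i t /=; rewrite -block_of_imset g'K.
exists (DProd hP' ((cartesianP hP').2 blocks_bij) f'); split=> [i|].
  exact: field_factor_transport (zx i) (f'E i).
by exists (fun i => @block_imset _ _ g (dp_part x i)).
Qed.

End Transport.

Section DirichletExponential.
Variables (F : finType -> Type) (S : finType).

Definition orbit_class n (x : dprodn F n S) : quot (@dp_orbit F n S) :=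
  exist _ (dp_orbit x) (ex_intro _ x (fun y => iff_refl _)).

Lemma orbit_classP n (C : quot (@dp_orbit F n S)) x y :
  sval C x -> sval C y <-> dp_orbit x y.
Proof.
case: C => C [a aC] /= /aC ax; rewrite aC.
by split=> [/(dp_orbit_trans (dp_orbit_sym ax))|/(dp_orbit_trans ax)].
Qed.

Lemma in_expD_class n (x y : dprodn F n S) :
  dp_orbit x y -> in_expD y (existT _ n (orbit_class x)).
Proof. by exists (orbit_class x). Qed.

Lemma in_expD_size n m (x : dprodn F n S) (y : dprodn F m S) e :
  in_expD x e -> in_expD y e -> n = m.
Proof. by case=> C [-> _] [C' [/(congr1 (@projT1 _ _)) /= ->]]. Qed.

Lemma in_expD_orbit n (x y : dprodn F n S) e :
  in_expD x e -> in_expD y e -> dp_orbit x y.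
Proof.
case=> C [-> Cx] [C' [CC' Cy]]; rewrite -(eq_from_Tagged CC') in Cy.
exact: (orbit_classP y Cx).1 Cy.
Qed.

Lemma in_expD_uniq n (x : dprodn F n S) e e' : in_expD x e -> in_expD x e' -> e = e'.
Proof.
case=> C [-> Cx] [C' [-> C'x]]; congr existT.
case: C C' Cx C'x => [C CP] [C' C'P] /= Cx C'x.
have CC' : C = C'.
  apply: functional_extensionality => y; apply: propositional_extensionality.
  have /= E := orbit_classP y (C := exist _ C CP) Cx.
  have /= E' := orbit_classP y (C := exist _ C' C'P) C'x.
  by split=> [/E /E'|/E' /E].
by subst C'; congr exist; apply: proof_irrelevance.
Qed.

End DirichletExponential.

Section ZstrToExpD.
Variables (X : CRingFunctor) (p : nat) (S : finType).
Local Notation F := (Fstr X p).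

Definition some_factorization (z : Zstr X p S) : {n & dprodn F n S} :=
  sval (constructive_indefinite_description _ (factorization_exists z)).

Lemma some_factorizationP z : factorization z (projT2 (some_factorization z)).
Proof. by rewrite /some_factorization; case: constructive_indefinite_description. Qed.

Definition Zstr_expD (z : Zstr X p S) : expD F S :=
  let: existT n x := some_factorization z in existT _ n (orbit_class x).

Lemma in_Zstr_expD z n (x : dprodn F n S) : in_expD x (Zstr_expD z) <-> factorization z x.
Proof.
rewrite /Zstr_expD; have := @some_factorizationP z.
case: (some_factorization z) => m y /= zy; split=> [x_in|zx].
  have y_in := in_expD_class (dp_orbit_refl y).
  have mn := in_expD_size y_in x_in; subst m.
  exact: factorization_orbit_closed zy (in_expD_orbit y_in x_in).
have mn := factorization_size zy zx; subst m.
exact/in_expD_class/(factorization_orbit zy).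
Qed.

Lemma Zstr_expD_inj : preserves_products X -> injective Zstr_expD.
Proof.
move=> hX z1 z2 z12; have [[n x] z2x] := factorization_exists z2.
by apply: (factorization_inj hX _ z2x); rewrite -in_Zstr_expD z12 in_Zstr_expD.
Qed.

Lemma Zstr_expD_surj e : preserves_products X -> prime p -> exists z, Zstr_expD z = e.
Proof.
move=> hX p_prime; case: e => n [C [x Cx]].
have [z zx] := factorization_surj x hX p_prime.
exists z; apply: (in_expD_uniq ((in_Zstr_expD z x).2 zx)).
by exists (exist _ C (ex_intro _ x Cx)); split=> //=; apply/Cx/dp_orbit_refl.
Qed.

End ZstrToExpD.

Theorem lemma4p5 (X : CRingFunctor) (hX : preserves_products X)
    (p : nat) (hp : prime p) :
  exists phi : forall S : finType, Zstr X p S -> expD (Fstr X p) S,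
    (forall S : finType, bijective (phi S)) /\
    (forall (S T : finType) (g : S -> T), bijective g ->
       forall (z : Zstr X p S) (z' : Zstr X p T),
         Ztr g z z' -> expD_tr (@Ftr X p) g (phi S z) (phi T z')).
Proof.
exists (fun S => @Zstr_expD X p S); split=> [S|S T g g_bij z z' zz'].
  by apply: inj_surj_bijective => [|e]; [apply: Zstr_expD_inj | apply: Zstr_expD_surj].
have [[n x] zx] := factorization_exists z.
have [y [z'y xy]] := factorization_transport g_bij zz' zx.
by exists n, x, y; split=> //; apply/in_Zstr_expD.
Qed.
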